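(* Let $A,B>0$, $0<\alpha\le1+\sqrt3$, and $p(x)=\frac{B}{12}[x^4-2A(2+\alpha)x^3+6A^2(1+\alpha)x^2]$. Then there exists $c>0$ independent of $A$ and $B$ such that $p((1+\alpha)A)\ge p(A)\ge cBA^4$. *)

From mathcomp Require Import all_boot all_order all_algebra.
From mathcomp Require Import reals.
Set Implicit Arguments. Unset Strict Implicit. Unset Printing Implicit Defensive.
Import Order.TTheory GRing.Theory Num.Theory.
Local Open Scope ring_scope.

Definition pquart {R : realType} (A B alpha x : R) : R :=
  B / 12%:R * (x ^+ 4 - 2%:R * A * (2%:R + alpha) * x ^+ 3
               + 6%:R * A ^+ 2 * (1 + alpha) * x ^+ 2).

(* At x = A the quartic equals (3 + 4 alpha) B A^4 / 12, and moving to x = (1 + alpha) A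
   adds alpha (4 + 6 alpha - alpha^3) B A^4 / 12.  The cubic factors as
   (alpha + 2) (1 + sqrt 3 - alpha) (alpha - 1 + sqrt 3), so it is nonnegative exactly up
   to alpha = 1 + sqrt 3; and 3 + 4 alpha >= 3 gives c = 1/4. *)
From mathcomp Require Import all_boot all_order all_algebra.
From mathcomp Require Import reals.
From mathcomp Require Import ring lra.
Import Order.TTheory GRing.Theory Num.Theory.
Local Open Scope ring_scope.

Lemma cubic_factor_sqrt3 (R : rcfType) (a : R) :
  4%:R + 6%:R * a - a ^+ 3
  = (a + 2%:R) * (1 + Num.sqrt 3%:R - a) * (a - 1 + Num.sqrt 3%:R).
Proof.
have s2 : Num.sqrt 3%:R ^+ 2 = 3%:R :> R by rewrite sqr_sqrtr // ler0n.
apply/eqP; rewrite -subr_eq0; apply/eqP.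
transitivity ((a + 2%:R) * (3%:R - Num.sqrt 3%:R ^+ 2)); first by ring.
by rewrite s2 subrr mulr0.
Qed.

Lemma cubic_ge0 {R : rcfType} {a : R} :
  0 <= a -> a <= 1 + Num.sqrt 3%:R -> 0 <= 4%:R + 6%:R * a - a ^+ 3.
Proof.
move=> lo hi; have s1 : 1 <= Num.sqrt (3%:R : R) by rewrite -{1}sqrtr1 ler_sqrt // ler1n.
rewrite cubic_factor_sqrt3; apply: mulr_ge0; [apply: mulr_ge0|]; lra.
Qed.

Section QuarticValues.
Variables (R : realType) (A B alpha : R).

Lemma pquart_at_A : pquart A B alpha A = B * A ^+ 4 / 12%:R * (3%:R + 4%:R * alpha).
Proof. by rewrite /pquart; ring. Qed.

Lemma pquart_at_shift :
  pquart A B alpha ((1 + alpha) * A)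
  = pquart A B alpha A + B * A ^+ 4 / 12%:R * (alpha * (4%:R + 6%:R * alpha - alpha ^+ 3)).
Proof. by rewrite /pquart; ring. Qed.

End QuarticValues.

Theorem proposition4p2 (R : realType) (alpha : R) :
  0 < alpha -> alpha <= 1 + Num.sqrt 3%:R ->
  exists2 c : R, 0 < c &
    forall A B : R, 0 < A -> 0 < B ->
      pquart A B alpha A <= pquart A B alpha ((1 + alpha) * A) /\
      c * B * A ^+ 4 <= pquart A B alpha A.
Proof.
move=> alpha_gt0 alpha_le.
have cubic := cubic_ge0 (ltW alpha_gt0) alpha_le.
exists (1 / 4%:R); first lra.
move=> A B A_gt0 B_gt0.
have scale_ge0 : 0 <= B * A ^+ 4 / 12%:R.
  by rewrite divr_ge0 ?ler0n // mulr_ge0 ?exprn_ge0 ?ltW.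
split.
  by rewrite pquart_at_shift lerDl; apply: mulr_ge0 => //; apply: mulr_ge0 => //; exact: ltW.
rewrite pquart_at_A.
have -> : 1 / 4%:R * B * A ^+ 4 = B * A ^+ 4 / 12%:R * 3%:R by field.
rewrite ler_wpM2l // lerDl; apply: mulr_ge0 => //; exact: ltW.
Qed.
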